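(* There exists a locally finite quasi-transitive tree that has no periodic proper edge-coloring.
   Context: Locally finite: all degrees finite; quasi-transitive: finitely many automorphism orbits on vertices. A proper edge-coloring assigns distinct colors to edges sharing a vertex; it is periodic if the subgroup of automorphisms mapping every edge to an edge of the same color has finitely many orbits on the vertex set. *)

From Stdlib Require Import List Relations.
Import ListNotations.
Set Implicit Arguments.

Section Graphs.
Variable V : Type.
Variable adj : V -> V -> Prop.

Definition simple_graph : Prop :=
  (forall x y, adj x y -> adj y x) /\ (forall x, ~ adj x x).

Definition locally_finite : Prop :=
  forall v, exists l : list V, forall w, adj v w -> In w l.

Fixpoint walk (l : list V) : Prop :=
  match l with
  | x :: ((y :: _) as t) => adj x y /\ walk t
  | _ => True
  end.

Definition has_cycle : Prop :=
  exists (x : V) (l : list V),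
    2 <= length l /\ NoDup (x :: l) /\ walk (x :: l) /\ adj (last l x) x.

Definition connected : Prop :=
  forall x y, clos_refl_trans V adj x y.

Definition is_tree : Prop :=
  simple_graph /\ inhabited V /\ connected /\ ~ has_cycle.

Definition automorphism (f : V -> V) : Prop :=
  (exists g : V -> V, (forall x, g (f x) = x) /\ (forall x, f (g x) = x)) /\
  (forall x y, adj x y <-> adj (f x) (f y)).

Definition finitely_many_orbits (G : (V -> V) -> Prop) : Prop :=
  exists s : list V, forall v, exists u, In u s /\ exists f, G f /\ f u = v.

Definition quasi_transitive : Prop := finitely_many_orbits automorphism.

Definition edge_coloring (C : Type) (c : V -> V -> C) : Prop :=
  forall x y, adj x y -> c x y = c y x.

Definition proper_edge_coloring (C : Type) (c : V -> V -> C) : Prop :=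
  edge_coloring c /\
  forall x y z, adj x y -> adj x z -> y <> z -> c x y <> c x z.

Definition color_preserving (C : Type) (c : V -> V -> C) (f : V -> V) : Prop :=
  automorphism f /\ forall x y, adj x y -> c (f x) (f y) = c x y.

Definition periodic (C : Type) (c : V -> V -> C) : Prop :=
  finitely_many_orbits (color_preserving c).

End Graphs.

(* Take the 3-regular tree T with one end fixed, so that every vertex has a
   parent and two children, and replace each edge by a small asymmetric gadget.
   The automorphisms of T fixing the end act transitively, which makes the new
   tree quasi-transitive, while the gadgets force every automorphism of the new
   tree to fix that end, i.e. to commute with the parent map.  In a connected
   graph with a proper edge-colouring, a colour-preserving automorphism is
   determined by the image of a single vertex.  So if two colour-preserving
   automorphisms send a vertex u to descendants d, d' at depth n of the same
   vertex, they agree on the n-th ancestor of u, hence coincide, and d = d'.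
   The 2^n descendants at depth n thus lie in distinct orbits for every n. *)

From Stdlib Require Import List Relations ZArith Lia Bool Permutation Classical.
From Stdlib Require Import ProofIrrelevance FunctionalExtensionality IndefiniteDescription.
Import ListNotations.
Set Implicit Arguments.

Section Walks.
Variables (X : Type) (adj : X -> X -> Prop).

Lemma walk_app (u v : list X) (a : X) :
  walk adj (u ++ a :: v) <-> walk adj (u ++ [a]) /\ walk adj (a :: v).
Proof.
  induction u as [|b [|c u] IH]; simpl in *; [tauto|tauto|].
  rewrite IH; tauto.
Qed.

Lemma last_cons (y d : X) (l : list X) : last (y :: l) d = last l y.
Proof.
  revert y d; induction l as [|z l IH]; intros y d; [reflexivity|].
  change (last (z :: l) d = last (z :: l) y); rewrite !IH; reflexivity.
Qed.

Lemma last_in (y d : X) (l : list X) : In (last (y :: l) d) (y :: l).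
Proof.
  revert y; induction l as [|z l IH]; intros y; [now left|].
  right; apply IH.
Qed.

Lemma walk_snoc (x a : X) (l : list X) :
  walk adj (x :: l ++ [a]) <-> walk adj (x :: l) /\ adj (last l x) a.
Proof.
  revert x; induction l as [|y l IH]; intros x; [simpl; tauto|].
  change (walk adj (x :: y :: l ++ [a]) <-> walk adj (x :: y :: l) /\ adj (last (y :: l) x) a).
  rewrite last_cons; simpl; rewrite (IH y); destruct l; simpl; tauto.
Qed.

Lemma walk_rotate (p q : list X) (a : X) :
  walk adj (p ++ a :: q ++ [hd a p]) -> walk adj (a :: q ++ p ++ [a]).
Proof.
  destruct p as [|y p]; [exact (fun H => H)|].
  change (walk adj ((y :: p) ++ a :: q ++ [y]) -> walk adj ((a :: q) ++ y :: p ++ [a])).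
  rewrite (walk_app (y :: p)), (walk_app (a :: q)); tauto.
Qed.

End Walks.

Definition parent_adj {X : Type} (pi : X -> X) (x y : X) : Prop := y = pi x \/ x = pi y.

Section ParentForest.
Variables (X : Type) (pi : X -> X) (height : X -> Z).
Hypothesis height_pi : forall x, height (pi x) = (height x + 1)%Z.

Lemma parent_adj_sym x y : parent_adj pi x y -> parent_adj pi y x.
Proof. unfold parent_adj; tauto. Qed.

Lemma parent_adj_irrefl x : ~ parent_adj pi x x.
Proof. intros [E|E]; pose proof (height_pi x) as H; rewrite <- E in H; lia. Qed.

Lemma parent_adj_upward x y :
  parent_adj pi x y -> (height x <= height y)%Z -> y = pi x.
Proof. intros [E|E] Hle; [exact E|]. rewrite E, height_pi in Hle; lia. Qed.

Lemma height_min_in (l : list X) (x : X) :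
  exists a, In a (x :: l) /\ forall y, In y (x :: l) -> (height a <= height y)%Z.
Proof.
  revert x; induction l as [|z l IH]; intros x.
  - exists x; split; [now left|]. intros y [<-|[]]; lia.
  - destruct (IH z) as [a [Ha Hmin]].
    destruct (Z.le_gt_cases (height x) (height a)).
    + exists x; split; [now left|]. intros y [<-|Hy]; [lia|]. specialize (Hmin y Hy); lia.
    + exists a; split; [now right|]. intros y [<-|Hy]; [lia|]. now apply Hmin.
Qed.

(* On a cycle, both neighbours of a vertex of minimal height would be its parent. *)
Lemma parent_adj_acyclic : ~ has_cycle (parent_adj pi).
Proof.
  intros [x [l [Hlen [Hnd [Hw Hclose]]]]].
  destruct (height_min_in l x) as [a [Ha Hmin]].
  destruct (in_split a (x :: l) Ha) as [p [q Hpq]].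
  assert (Hperm : Permutation (x :: l) (a :: q ++ p)).
  { rewrite Hpq, <- Permutation_middle. apply perm_skip, Permutation_app_comm. }
  assert (Hcyc : walk (parent_adj pi) (a :: q ++ p ++ [a])).
  { apply walk_rotate.
    replace (p ++ a :: q ++ [hd a p]) with (x :: l ++ [x]).
    - apply walk_snoc; auto.
    - replace (hd a p) with x by (destruct p; injection Hpq; auto).
      rewrite app_comm_cons, Hpq, <- app_assoc; reflexivity. }
  assert (Hlow : forall y, In y (q ++ p) -> (height a <= height y)%Z).
  { intros y Hy. apply Hmin, (Permutation_in _ (Permutation_sym Hperm)). now right. }
  rewrite app_assoc in Hcyc.
  apply (Permutation_NoDup Hperm) in Hnd.
  apply Permutation_length in Hperm; simpl in Hperm.
  destruct (q ++ p) as [|b r] eqn:Er; simpl in Hperm; [lia|].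
  destruct r as [|b' r]; simpl in Hperm; [lia|].
  assert (Hfirst : b = pi a).
  { apply parent_adj_upward; [apply Hcyc|apply Hlow; now left]. }
  assert (Hlast : last (b :: b' :: r) a = pi a).
  { apply parent_adj_upward.
    - apply parent_adj_sym. exact (proj2 (proj1 (walk_snoc _ a a _) Hcyc)).
    - apply Hlow, last_in. }
  inversion Hnd as [|? ? _ Hnd']; inversion Hnd' as [|? ? Hb _].
  apply Hb. rewrite Hfirst, <- Hlast. exact (last_in b' a r).
Qed.

Lemma parent_adj_ancestor (n : nat) (x : X) :
  clos_refl_trans X (parent_adj pi) x (Nat.iter n pi x) /\
  clos_refl_trans X (parent_adj pi) (Nat.iter n pi x) x.
Proof.
  induction n as [|n [IH1 IH2]]; [split; apply rt_refl|].
  split; eapply rt_trans; [exact IH1| |apply rt_step; right; reflexivity|exact IH2].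
  apply rt_step; left; reflexivity.
Qed.

Lemma parent_adj_tree :
  inhabited X -> (forall x y, exists n n', Nat.iter n pi x = Nat.iter n' pi y) ->
  is_tree (parent_adj pi).
Proof.
  intros Hne Hanc.
  split; [split; [apply parent_adj_sym|apply parent_adj_irrefl]|].
  split; [exact Hne|split; [|apply parent_adj_acyclic]].
  intros x y. destruct (Hanc x y) as [n [n' E]].
  eapply rt_trans; [apply (parent_adj_ancestor n x)|].
  rewrite E; apply (parent_adj_ancestor n' y).
Qed.

Lemma parent_adj_automorphism (f g : X -> X) :
  (forall x, g (f x) = x) -> (forall x, f (g x) = x) ->
  (forall x, f (pi x) = pi (f x)) -> automorphism (parent_adj pi) f.
Proof.
  intros Hgf Hfg Hpi. split; [exists g; auto|].
  assert (Hinj : forall x y, f x = f y -> x = y).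
  { intros x y E. rewrite <- (Hgf x), <- (Hgf y), E. reflexivity. }
  intros x y. unfold parent_adj. rewrite <- !Hpi. split.
  - intros [->| ->]; auto.
  - intros [E|E]; apply Hinj in E; auto.
Qed.

End ParentForest.

Section Automorphisms.
Variables (X : Type) (adj : X -> X -> Prop).

Lemma automorphism_inverse f : automorphism adj f ->
  exists g, automorphism adj g /\ (forall x, g (f x) = x) /\ (forall x, f (g x) = x).
Proof.
  intros [[g [Hgf Hfg]] Hf]. exists g. split; [|auto].
  split; [exists f; auto|]. intros x y. rewrite (Hf (g x) (g y)), !Hfg. tauto.
Qed.

Lemma automorphism_adj f x y : automorphism adj f -> adj x y -> adj (f x) (f y).
Proof. intros [_ Hf]. apply Hf. Qed.

Definition aut_invariant (P : X -> Prop) : Prop :=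
  forall f x, automorphism adj f -> P x -> P (f x).

Lemma aut_invariant_iff P f x :
  aut_invariant P -> automorphism adj f -> (P x <-> P (f x)).
Proof.
  intros HP Hf. split; [apply HP; auto|].
  destruct (automorphism_inverse Hf) as [g [Hg [Hgf _]]].
  intros Hfx. rewrite <- (Hgf x). apply HP; auto.
Qed.

Definition is_leaf (x : X) : Prop := forall y z, adj x y -> adj x z -> y = z.
Definition has_leaf_nbr (x : X) : Prop := exists y, adj x y /\ is_leaf y.
Definition has_two_leaf_nbrs (x : X) : Prop :=
  exists y z, y <> z /\ adj x y /\ adj x z /\ is_leaf y /\ is_leaf z.

Lemma is_leaf_invariant : aut_invariant is_leaf.
Proof.
  intros f x Hf Hx y z Hy Hz.
  destruct (automorphism_inverse Hf) as [g [[_ Hg] [Hgf Hfg]]].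
  rewrite <- (Hfg y), <- (Hfg z). f_equal. apply Hx.
  - rewrite <- (Hgf x). exact (proj1 (Hg _ _) Hy).
  - rewrite <- (Hgf x). exact (proj1 (Hg _ _) Hz).
Qed.

Lemma has_leaf_nbr_invariant : aut_invariant has_leaf_nbr.
Proof.
  intros f x Hf [y [Hy Ly]]. exists (f y).
  split; [apply automorphism_adj; auto|apply is_leaf_invariant; auto].
Qed.

Lemma has_two_leaf_nbrs_invariant : aut_invariant has_two_leaf_nbrs.
Proof.
  intros f x Hf [y [z [Hyz [Hy [Hz [Ly Lz]]]]]].
  destruct (automorphism_inverse Hf) as [g [_ [Hgf _]]].
  exists (f y), (f z). repeat split; try (apply automorphism_adj; assumption);
    try (apply is_leaf_invariant; assumption).
  intros E. apply Hyz. rewrite <- (Hgf y), <- (Hgf z), E. reflexivity.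
Qed.

Lemma color_preserving_agree {C} {c : X -> X -> C} {f g x} :
  connected adj -> proper_edge_coloring adj c ->
  color_preserving adj c f -> color_preserving adj c g -> f x = g x ->
  forall y, f y = g y.
Proof.
  intros Hcon [_ Hproper] [Hf Hcf] [Hg Hcg] Hx y.
  specialize (Hcon x y). apply clos_rt_rt1n in Hcon.
  induction Hcon as [x|x z y Hxz _ IH]; [exact Hx|].
  apply IH. apply NNPP. intros Hne.
  apply (Hproper (f x) (f z) (g z)); [apply automorphism_adj; auto| |exact Hne|].
  - rewrite Hx; apply automorphism_adj; auto.
  - rewrite (Hcf x z Hxz), Hx, (Hcg x z Hxz). reflexivity.
Qed.

End Automorphisms.

(* A node (k, D) lists the digits D j, zero outside some [lo, k); its parent
   forgets digit k - 1 and its children set digit k.  This is the 3-regular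
   tree seen from one of its ends, with k the horocycle index. *)
Definition finite_digits (x : Z * (Z -> bool)) : Prop :=
  exists lo, forall j, snd x j = true -> (lo <= j < fst x)%Z.

Definition node : Type := {x : Z * (Z -> bool) | finite_digits x}.
Definition level (m : node) : Z := fst (proj1_sig m).
Definition digit (m : node) : Z -> bool := snd (proj1_sig m).

Lemma digit_lt_level m j : digit m j = true -> (j < level m)%Z.
Proof.
  destruct m as [[k D] [lo H]]; unfold digit, level; simpl in *.
  intros E; apply H in E; lia.
Qed.

Lemma digit_lower_bound m : exists lo, forall j, digit m j = true -> (lo <= j)%Z.
Proof.
  destruct m as [[k D] [lo H]]; unfold digit; simpl in *.
  exists lo. intros j E; apply H in E; lia.
Qed.

Lemma node_ext (m m' : node) :
  level m = level m' -> (forall j, digit m j = digit m' j) -> m = m'.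
Proof.
  destruct m as [[k D] Hm], m' as [[k' D'] Hm']; unfold level, digit; simpl.
  intros -> HD. apply functional_extensionality in HD; subst D'.
  f_equal. apply proof_irrelevance.
Qed.

Definition mk_node (k : Z) (D : Z -> bool) (H : finite_digits (k, D)) : node :=
  exist _ (k, D) H.

Lemma finite_digits_parent m :
  finite_digits (level m - 1, fun j => digit m j && (j <? level m - 1))%Z.
Proof.
  destruct (digit_lower_bound m) as [lo H]. exists lo; intros j; simpl.
  rewrite andb_true_iff, Z.ltb_lt; intros [Hj ?]; specialize (H j Hj); lia.
Qed.

Definition parent (m : node) : node := mk_node (finite_digits_parent m).

Lemma finite_digits_child m (b : bool) :
  finite_digits (level m + 1, fun j => digit m j || (b && (j =? level m)))%Z.
Proof.
  destruct (digit_lower_bound m) as [lo H]. exists (Z.min lo (level m)); intros j; simpl.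
  rewrite orb_true_iff, andb_true_iff, Z.eqb_eq.
  intros [Hj|[_ ->]]; [pose proof (H j Hj); pose proof (digit_lt_level m j Hj)|]; lia.
Qed.

Definition child (m : node) (b : bool) : node := mk_node (finite_digits_child m b).

Lemma level_parent m : level (parent m) = (level m - 1)%Z.
Proof. reflexivity. Qed.

Lemma digit_parent m j : digit (parent m) j = digit m j && (j <? level m - 1)%Z.
Proof. reflexivity. Qed.

Lemma level_child m b : level (child m b) = (level m + 1)%Z.
Proof. reflexivity. Qed.

Lemma digit_child m b j : digit (child m b) j = digit m j || (b && (j =? level m)%Z).
Proof. reflexivity. Qed.

Lemma parent_child m b : parent (child m b) = m.
Proof.
  apply node_ext; [rewrite level_parent, level_child; lia|]. intros j.
  rewrite digit_parent, digit_child, level_child.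
  destruct (digit m j) eqn:E; [apply digit_lt_level in E|]; simpl;
    destruct b, (Z.eqb_spec j (level m)), (Z.ltb_spec j (level m + 1 - 1));
    simpl; reflexivity || lia.
Qed.

Lemma child_parent y : y = child (parent y) (digit y (level y - 1)%Z).
Proof.
  apply node_ext; [rewrite level_child, level_parent; lia|]. intros j.
  rewrite digit_child, digit_parent, level_parent.
  destruct (Z.ltb_spec j (level y - 1)), (Z.eqb_spec j (level y - 1)); try lia.
  - rewrite andb_true_r, andb_false_r, orb_false_r. reflexivity.
  - subst j. rewrite !andb_false_r, andb_true_r. reflexivity.
  - rewrite !andb_false_r. simpl.
    destruct (digit y j) eqn:E; [apply digit_lt_level in E; lia|reflexivity].
Qed.

Lemma children_of m y : parent y = m -> y = child m true \/ y = child m false.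
Proof.
  intros <-. pose proof (child_parent y) as E.
  destruct (digit y (level y - 1)%Z); auto.
Qed.

Lemma child_true_neq_false m : child m true <> child m false.
Proof.
  intros E. assert (H : digit (child m true) (level m) = digit (child m false) (level m))
    by (rewrite E; reflexivity).
  rewrite !digit_child, Z.eqb_refl, orb_true_r, orb_false_r in H.
  symmetry in H. apply digit_lt_level in H. lia.
Qed.

Lemma finite_digits_shift (d : Z) m :
  finite_digits (level m + d, fun j => digit m (j - d))%Z.
Proof.
  destruct (digit_lower_bound m) as [lo H]. exists (lo + d)%Z; intros j; simpl.
  intros Hj; pose proof (H _ Hj); pose proof (digit_lt_level m _ Hj); lia.
Qed.

Definition shift (d : Z) (m : node) : node := mk_node (finite_digits_shift d m).

Lemma level_shift d m : level (shift d m) = (level m + d)%Z.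
Proof. reflexivity. Qed.

Lemma digit_shift d m j : digit (shift d m) j = digit m (j - d)%Z.
Proof. reflexivity. Qed.

Lemma finite_digits_flip (y m : node) :
  finite_digits (level m, fun j => xorb (digit m j) (digit y j && (j <? level m)))%Z.
Proof.
  destruct (digit_lower_bound m) as [lo H], (digit_lower_bound y) as [lo' H'].
  exists (Z.min lo lo'); intros j; simpl.
  destruct (digit m j) eqn:E1, (digit y j) eqn:E2, (Z.ltb_spec j (level m));
    simpl; intros HH; try discriminate;
    try (pose proof (H _ E1); pose proof (digit_lt_level m _ E1)); try (pose proof (H' _ E2)); lia.
Qed.

Definition flip (y m : node) : node := mk_node (finite_digits_flip y m).

Lemma level_flip y m : level (flip y m) = level m.
Proof. reflexivity. Qed.

Lemma digit_flip y m j :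
  digit (flip y m) j = xorb (digit m j) (digit y j && (j <? level m)%Z).
Proof. reflexivity. Qed.

Definition end_automorphism (f : node -> node) : Prop :=
  (exists g, (forall x, g (f x) = x) /\ (forall x, f (g x) = x)) /\
  forall x, f (parent x) = parent (f x).

Lemma end_automorphism_comp f g :
  end_automorphism f -> end_automorphism g -> end_automorphism (fun x => f (g x)).
Proof.
  intros [[f' [Hf1 Hf2]] Hf] [[g' [Hg1 Hg2]] Hg]. split.
  - exists (fun x => g' (f' x)). split; intros x; congruence.
  - intros x. rewrite Hg, Hf. reflexivity.
Qed.

Lemma end_automorphism_shift d : end_automorphism (shift d).
Proof.
  split.
  - exists (shift (- d)).
    split; intros x; apply node_ext; intros; rewrite ?level_shift, ?digit_shift;
      f_equal; lia.
  - intros x. apply node_ext; [rewrite level_shift, !level_parent, level_shift; lia|intros j].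
    rewrite digit_shift, !digit_parent, digit_shift, level_shift.
    destruct (Z.ltb_spec (j - d) (level x - 1)), (Z.ltb_spec j (level x + d - 1));
      reflexivity || lia.
Qed.

Lemma end_automorphism_flip y : end_automorphism (flip y).
Proof.
  split.
  - exists (flip y). split; intros x; apply node_ext; intros; rewrite ?level_flip;
      [reflexivity| |reflexivity|]; rewrite !digit_flip, level_flip, xorb_assoc,
      xorb_nilpotent, xorb_false_r; reflexivity.
  - intros x. apply node_ext; intros; rewrite ?level_flip, ?level_parent; [reflexivity|].
    rewrite digit_flip, !digit_parent, digit_flip, level_flip, level_parent.
    destruct (Z.ltb_spec j (level x - 1)), (Z.ltb_spec j (level x));
      try lia; rewrite ?andb_true_r, ?andb_false_r; reflexivity.
Qed.

Lemma finite_digits_root : finite_digits (0%Z, fun _ => false).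
Proof. exists 0%Z; intros j H; discriminate. Qed.

Definition root : node := mk_node finite_digits_root.

Lemma end_automorphisms_transitive m : exists f, end_automorphism f /\ f root = m.
Proof.
  exists (fun x => flip m (shift (level m) x)). split.
  - apply end_automorphism_comp; [apply end_automorphism_flip|apply end_automorphism_shift].
  - apply node_ext; [reflexivity|]. intros j.
    rewrite digit_flip, digit_shift, level_shift.
    destruct (digit m j) eqn:E; [|reflexivity].
    apply digit_lt_level, Z.ltb_lt in E. simpl; rewrite E; reflexivity.
Qed.

Lemma iter_parent n m :
  level (Nat.iter n parent m) = (level m - Z.of_nat n)%Z /\
  forall j, digit (Nat.iter n parent m) j = digit m j && (j <? level m - Z.of_nat n)%Z.
Proof.
  induction n as [|n [IH1 IH2]]; simpl.
  - split; [lia|]. intros j.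
    destruct (digit m j) eqn:E; [apply digit_lt_level in E|reflexivity].
    symmetry; apply Z.ltb_lt; lia.
  - split; [rewrite level_parent; lia|]. intros j.
    rewrite digit_parent, IH2, IH1, <- andb_assoc. f_equal.
    destruct (Z.ltb_spec j (level m - Z.of_nat n)),
      (Z.ltb_spec j (level m - Z.of_nat n - 1)),
      (Z.ltb_spec j (level m - Z.pos (Pos.of_succ_nat n))); reflexivity || lia.
Qed.

Lemma common_ancestor m m' : exists n n', Nat.iter n parent m = Nat.iter n' parent m'.
Proof.
  destruct (digit_lower_bound m) as [lo H], (digit_lower_bound m') as [lo' H'].
  set (L := Z.min (Z.min lo lo') (Z.min (level m) (level m'))).
  exists (Z.to_nat (level m - L)), (Z.to_nat (level m' - L)).
  destruct (iter_parent (Z.to_nat (level m - L)) m) as [A1 A2].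
  destruct (iter_parent (Z.to_nat (level m' - L)) m') as [B1 B2].
  apply node_ext; [rewrite A1, B1; lia|]. intros j. rewrite A2, B2.
  destruct (digit m j) eqn:E1, (digit m' j) eqn:E2; simpl; try reflexivity;
    try apply H in E1; try apply H' in E2;
    repeat match goal with |- context [(?a <? ?b)%Z] => destruct (Z.ltb_spec a b) end;
    reflexivity || lia.
Qed.

Fixpoint descendants (n : nat) (m : node) : list node :=
  match n with
  | O => [m]
  | S n => descendants n (child m true) ++ descendants n (child m false)
  end.

Lemma descendants_length n m : length (descendants n m) = 2 ^ n.
Proof.
  revert m; induction n as [|n IH]; intros m; [reflexivity|].
  simpl; rewrite length_app, !IH; lia.
Qed.

Lemma iter_parent_descendants n m d :
  In d (descendants n m) -> Nat.iter n parent d = m.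
Proof.
  revert m; induction n as [|n IH]; intros m Hd; simpl in Hd.
  - destruct Hd as [->|[]]; reflexivity.
  - simpl; apply in_app_or in Hd as [Hd|Hd]; rewrite (IH _ Hd); apply parent_child.
Qed.

Lemma descendants_NoDup n m : NoDup (descendants n m).
Proof.
  revert m; induction n as [|n IH]; intros m; simpl; [repeat constructor; auto|].
  apply NoDup_app; auto. intros d Ht Hf.
  apply iter_parent_descendants in Ht, Hf. rewrite Ht in Hf.
  exact (child_true_neq_false Hf).
Qed.

(* Each edge from m up to [parent m] becomes the path
   (m, Main) - (m, Fork) - (m, Spur) - (parent m, Main), with two pendant
   leaves at the fork and one at the spur: the asymmetry lets every
   automorphism see which way is up. *)
Inductive kind := Main | Fork | Spur | ForkLeafL | ForkLeafR | SpurLeaf.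

Definition vertex : Type := (node * kind)%type.

Definition up (x : vertex) : vertex :=
  let (m, k) := x in
  match k with
  | Main => (m, Fork)
  | Fork => (m, Spur)
  | Spur => (parent m, Main)
  | ForkLeafL | ForkLeafR => (m, Fork)
  | SpurLeaf => (m, Spur)
  end.

Definition gadget_adj : vertex -> vertex -> Prop := parent_adj up.

Definition height (x : vertex) : Z :=
  let (m, k) := x in
  match k with
  | Main | ForkLeafL | ForkLeafR => (- 3 * level m)%Z
  | Fork | SpurLeaf => (- 3 * level m + 1)%Z
  | Spur => (- 3 * level m + 2)%Z
  end.

Lemma height_up x : height (up x) = (height x + 1)%Z.
Proof. destruct x as [m []]; unfold up, height; rewrite ?level_parent; lia. Qed.

Definition nbrs (x : vertex) : list vertex :=
  let (m, k) := x in
  match k with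
  | Main => [(m, Fork); (child m true, Spur); (child m false, Spur)]
  | Fork => [(m, Spur); (m, Main); (m, ForkLeafL); (m, ForkLeafR)]
  | Spur => [(parent m, Main); (m, Fork); (m, SpurLeaf)]
  | ForkLeafL | ForkLeafR => [(m, Fork)]
  | SpurLeaf => [(m, Spur)]
  end.

Lemma gadget_adj_iff x y : gadget_adj x y <-> In y (nbrs x).
Proof.
  destruct x as [m k]. unfold gadget_adj, parent_adj. split.
  - intros [->|E]; [destruct k; simpl; auto|].
    destruct y as [m' k'], k'; simpl in E; injection E as -> ->; simpl; auto.
    destruct (children_of (eq_refl (parent m'))) as [E|E]; rewrite <- E; auto.
  - intros H; destruct k; simpl in H;
      repeat (destruct H as [<-|H]; [simpl; rewrite ?parent_child; auto|]); contradiction.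
Qed.

Lemma iter_up_main n m : Nat.iter (3 * n) up (m, Main) = (Nat.iter n parent m, Main).
Proof.
  induction n as [|n IH]; [reflexivity|].
  replace (3 * S n) with (3 + 3 * n) by lia. rewrite Nat.iter_add, IH. reflexivity.
Qed.

Lemma up_reaches_main x : exists n m, Nat.iter n up x = (m, Main).
Proof.
  destruct x as [m []];
    [exists 0|exists 2|exists 1|exists 3|exists 3|exists 2]; eexists; reflexivity.
Qed.

Lemma gadget_is_tree : is_tree gadget_adj.
Proof.
  apply (parent_adj_tree _ _ height_up); [exact (inhabits (root, Main))|].
  intros x y.
  destruct (up_reaches_main x) as [n [m Hm]], (up_reaches_main y) as [n' [m' Hm']].
  destruct (common_ancestor m m') as [a [a' E]].
  exists (3 * a + n), (3 * a' + n').
  rewrite !Nat.iter_add, Hm, Hm', !iter_up_main, E. reflexivity.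
Qed.

Lemma gadget_locally_finite : locally_finite gadget_adj.
Proof. intros x. exists (nbrs x). intros y. apply gadget_adj_iff. Qed.

Lemma gadget_quasi_transitive : quasi_transitive gadget_adj.
Proof.
  exists (map (fun k => (root, k)) [Main; Fork; Spur; ForkLeafL; ForkLeafR; SpurLeaf]).
  intros [m k]. destruct (end_automorphisms_transitive m) as [f [[[g [Hgf Hfg]] Hf] E]].
  exists (root, k). split; [destruct k; simpl; tauto|].
  exists (fun x => (f (fst x), snd x)). split; [|simpl; rewrite E; reflexivity].
  apply parent_adj_automorphism with (g := fun x => (g (fst x), snd x)).
  - intros [x l]; simpl; rewrite Hgf; reflexivity.
  - intros [x l]; simpl; rewrite Hfg; reflexivity.
  - intros [x []]; simpl; rewrite ?Hf; reflexivity.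
Qed.

Definition leaf_kind (k : kind) : Prop :=
  match k with ForkLeafL | ForkLeafR | SpurLeaf => True | _ => False end.

Lemma gadget_is_leaf m k : is_leaf gadget_adj (m, k) <-> leaf_kind k.
Proof.
  split.
  - intros H.
    assert (Hn : forall y z, In y (nbrs (m, k)) -> In z (nbrs (m, k)) -> y = z)
      by (intros y z Hy Hz; apply H; apply gadget_adj_iff; auto).
    destruct k; simpl in Hn |- *; auto;
      discriminate (Hn _ _ (or_introl eq_refl) (or_intror (or_introl eq_refl))).
  - intros Hk y z Hy Hz. apply gadget_adj_iff in Hy, Hz.
    destruct k; try contradiction; simpl in Hy, Hz;
      destruct Hy as [<-|[]], Hz as [<-|[]]; reflexivity.
Qed.

Lemma leaf_nbrs m k y :
  gadget_adj (m, k) y -> is_leaf gadget_adj y ->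
  (k = Fork /\ (y = (m, ForkLeafL) \/ y = (m, ForkLeafR))) \/ (k = Spur /\ y = (m, SpurLeaf)).
Proof.
  intros Hy Ly. apply gadget_adj_iff in Hy. destruct y as [m' k'].
  apply gadget_is_leaf in Ly.
  destruct k; simpl in Hy; repeat destruct Hy as [Hy|Hy];
    try injection Hy as <- <-; simpl in Ly; tauto.
Qed.

Lemma gadget_has_leaf_nbr m k : has_leaf_nbr gadget_adj (m, k) <-> k = Fork \/ k = Spur.
Proof.
  split.
  - intros [y [Hy Ly]]. destruct (leaf_nbrs Hy Ly) as [[-> _]|[-> _]]; auto.
  - intros [->| ->]; [exists (m, ForkLeafL)|exists (m, SpurLeaf)];
      (split; [apply gadget_adj_iff; simpl; tauto|apply gadget_is_leaf; exact I]).
Qed.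

Lemma gadget_has_two_leaf_nbrs m k : has_two_leaf_nbrs gadget_adj (m, k) <-> k = Fork.
Proof.
  split.
  - intros [y [z [Hyz [Hy [Hz [Ly Lz]]]]]].
    destruct (leaf_nbrs Hy Ly) as [[-> _]|[Hk ->]]; [reflexivity|].
    destruct (leaf_nbrs Hz Lz) as [[Hk' _]|[_ ->]]; [congruence|contradiction].
  - intros ->. exists (m, ForkLeafL), (m, ForkLeafR).
    repeat split; try discriminate; try (apply gadget_adj_iff; simpl; tauto);
      apply gadget_is_leaf; exact I.
Qed.

Lemma kind_spec y :
  (snd y = Main <-> ~ is_leaf gadget_adj y /\ ~ has_leaf_nbr gadget_adj y) /\
  (snd y = Fork <-> has_two_leaf_nbrs gadget_adj y) /\
  (snd y = Spur <-> has_leaf_nbr gadget_adj y /\ ~ has_two_leaf_nbrs gadget_adj y).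
Proof.
  destruct y as [m k]; simpl.
  rewrite gadget_is_leaf, gadget_has_leaf_nbr, gadget_has_two_leaf_nbrs.
  destruct k; simpl; intuition discriminate.
Qed.

Definition inner_kind (k : kind) : Prop := k = Main \/ k = Fork \/ k = Spur.

Lemma automorphism_kind f x k :
  automorphism gadget_adj f -> inner_kind k ->
  (snd x = k <-> snd (f x) = k).
Proof.
  intros Hf Hk.
  pose proof (aut_invariant_iff x (@is_leaf_invariant _ gadget_adj) Hf) as Hl.
  pose proof (aut_invariant_iff x (@has_leaf_nbr_invariant _ gadget_adj) Hf) as Hn.
  pose proof (aut_invariant_iff x (@has_two_leaf_nbrs_invariant _ gadget_adj) Hf) as Ht.
  destruct (kind_spec x) as [Mx [Fx Sx]], (kind_spec (f x)) as [Mf [Ff Sf]].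
  destruct Hk as [->|[->| ->]]; tauto.
Qed.

Lemma inner_kind_up x : inner_kind (snd (up x)).
Proof. destruct x as [m []]; unfold inner_kind; simpl; auto. Qed.

Lemma automorphism_up f x :
  automorphism gadget_adj f -> inner_kind (snd x) -> f (up x) = up (f x).
Proof.
  intros Hf Hx.
  assert (Hk : snd (f x) = snd x) by (apply (automorphism_kind x Hf Hx); reflexivity).
  assert (Hupk : snd (f (up x)) = snd (up x))
    by (apply (automorphism_kind (up x) Hf (inner_kind_up x)); reflexivity).
  assert (Hadj : In (f (up x)) (nbrs (f x)))
    by (apply gadget_adj_iff, automorphism_adj; [exact Hf|left; reflexivity]).
  destruct x as [m k], (f (m, k)) as [m' k'], (f (up (m, k))) as [m'' k''].
  simpl in Hx, Hk, Hupk; subst k'.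
  destruct Hx as [->|[->| ->]]; simpl in Hupk, Hadj |- *;
    repeat destruct Hadj as [Hadj|Hadj]; try injection Hadj as <- <-;
    congruence || contradiction.
Qed.

Lemma automorphism_iter_up f x n :
  automorphism gadget_adj f -> inner_kind (snd x) ->
  f (Nat.iter n up x) = Nat.iter n up (f x).
Proof.
  intros Hf Hx. induction n as [|n IH]; [reflexivity|]. simpl.
  rewrite automorphism_up, IH; [reflexivity|exact Hf|].
  destruct n; [exact Hx|apply inner_kind_up].
Qed.

Lemma color_preserving_descendants {C} {c : vertex -> vertex -> C} {f1 f2 u n m d1 d2} :
  proper_edge_coloring gadget_adj c ->
  color_preserving gadget_adj c f1 -> color_preserving gadget_adj c f2 ->
  f1 u = (d1, Main) -> f2 u = (d2, Main) ->
  In d1 (descendants n m) -> In d2 (descendants n m) -> d1 = d2.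
Proof.
  intros Hc Hf1 Hf2 E1 E2 H1 H2.
  assert (Hu : inner_kind (snd u)).
  { left. apply (automorphism_kind u (proj1 Hf1) (or_introl eq_refl)).
    rewrite E1; reflexivity. }
  assert (Hagree : f1 (Nat.iter (3 * n) up u) = f2 (Nat.iter (3 * n) up u)).
  { rewrite (automorphism_iter_up _ _ (proj1 Hf1) Hu).
    rewrite (automorphism_iter_up _ _ (proj1 Hf2) Hu).
    rewrite E1, E2, !iter_up_main.
    rewrite (iter_parent_descendants _ _ _ H1), (iter_parent_descendants _ _ _ H2).
    reflexivity. }
  pose proof (proj1 (proj2 (proj2 gadget_is_tree))) as Hconn.
  pose proof (color_preserving_agree Hconn Hc Hf1 Hf2 Hagree u) as Hfu.
  rewrite E1, E2 in Hfu. injection Hfu; auto.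
Qed.

Lemma gadget_no_periodic_coloring C (c : vertex -> vertex -> C) :
  proper_edge_coloring gadget_adj c -> ~ periodic gadget_adj c.
Proof.
  intros Hc [s Hs].
  destruct (functional_choice (fun d u => In u s /\
      exists f, color_preserving gadget_adj c f /\ f u = (d, Main))) as [rep Hrep].
  { intros d. destruct (Hs (d, Main)) as [u [Hu Hf]]. exists u; auto. }
  set (n := length s).
  assert (Hle : length (descendants n root) <= n).
  { rewrite <- (length_map rep). apply NoDup_incl_length.
    - apply NoDup_map_NoDup_ForallPairs; [|apply descendants_NoDup].
      intros d1 d2 H1 H2 E.
      destruct (Hrep d1) as [_ [f1 [Hf1 E1]]], (Hrep d2) as [_ [f2 [Hf2 E2]]].
      rewrite E in E1. exact (color_preserving_descendants Hc Hf1 Hf2 E1 E2 H1 H2).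
    - intros u Hu. apply in_map_iff in Hu as [d [<- _]]. apply Hrep. }
  rewrite descendants_length in Hle. pose proof (Nat.pow_gt_lin_r 2 n). lia.
Qed.

Theorem mainTheorem18 :
  exists (V : Type) (adj : V -> V -> Prop),
    is_tree adj /\ locally_finite adj /\ quasi_transitive adj /\
    forall (C : Type) (c : V -> V -> C),
      proper_edge_coloring adj c -> ~ periodic adj c.
Proof.
  exists vertex, gadget_adj.
  split; [exact gadget_is_tree|].
  split; [exact gadget_locally_finite|].
  split; [exact gadget_quasi_transitive|].
  exact gadget_no_periodic_coloring.
Qed.
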